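(* Let $a\in V$. For all $n\ge 2$ and all $t\in(\Sigma^{\mathrm{CoR}}_{n})_{\le 1}$, there exist $t_0\in(\Sigma^{\mathrm{CoR}}_{1})_{\le 1}$ and $t_1\in(\Pi^{\mathrm{CoR}}_{n-1})_{\le 1}$ such that $t\sim_{\mathrm{REL}_{\ge 3}} t_0[t_1/a]$.
   Context: Fix a non-empty finite set $V$ of variables. CoR terms are generated by $t ::= a \mid \bot \mid \top \mid t \cup t \mid t \cap t \mid t^{-} \mid \mathrm{I} \mid \mathrm{D} \mid t \cdot t \mid t \dagger t \mid t^{\pi}$, where $a \in V$ and $\pi$ ranges over all maps $\{1,2\}\to\{1,2\}$. A structure $M$ consists of a non-empty set $|M|$ and a binary relation $a^M\subseteq|M|^2$ for each $a\in V$. The interpretation $[\![t]\!]_M\subseteq|M|^2$: $[\![a]\!]_M=a^M$, $[\![\bot]\!]_M=\emptyset$, $[\![\top]\!]_M=|M|^2$, $\cup,\cap$ set-theoretic, $[\![t^-]\!]_M=|M|^2\setminus[\![t]\!]_M$, $[\![\mathrm{I}]\!]_M=\{(x,y):x=y\}$, $[\![\mathrm{D}]\!]_M=\{(x,y):x\ne y\}$, $R\cdot S=\{(x,y):\exists z,(x,z)\in R\wedge(z,y)\in S\}$, $R\dagger S=\{(x,y):\forall z,(x,z)\in R\vee(z,y)\in S\}$, $R^{\pi}=\{(x_1,x_2):(x_{\pi(1)},x_{\pi(2)})\in R\}$. $\mathrm{REL}_{\ge 3}$ is the class of structures with at least $3$ elements; $t\sim_{\mathrm{REL}_{\ge 3}}s$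 iff $[\![t]\!]_M=[\![s]\!]_M$ for all $M\in\mathrm{REL}_{\ge 3}$. $\mathrm{vo}(t)$ is the number of occurrences of variables in $t$, $S_{\le k}=\{t\in S:\mathrm{vo}(t)\le k\}$, and $t[s/a]$ is $t$ with each occurrence of $a$ replaced by $s$. The dot-dagger alternation hierarchy: $\Sigma^{\mathrm{CoR}}_n,\Pi^{\mathrm{CoR}}_n$ are the least sets such that $\Sigma^{\mathrm{CoR}}_0=\Pi^{\mathrm{CoR}}_0$ is the set of terms containing neither $\cdot$ nor $\dagger$; $\Sigma^{\mathrm{CoR}}_n\cup\Pi^{\mathrm{CoR}}_n\subseteq\Sigma^{\mathrm{CoR}}_{n+1}\cap\Pi^{\mathrm{CoR}}_{n+1}$; for $n\ge1$, if $s,u\in\Sigma^{\mathrm{CoR}}_n$ then $s\cup u,s\cap u,s\cdot u,s^{\pi}\in\Sigma^{\mathrm{CoR}}_n$ and $s\dagger u\in\Pi^{\mathrm{CoR}}_{n+1}$; for $n\ge1$, if $s,u\in\Pi^{\mathrm{CoR}}_n$ then $s\cup u,s\cap u,s\dagger u,s^{\pi}\in\Pi^{\mathrm{CoR}}_n$ and $s\cdot u\in\Sigma^{\mathrm{CoR}}_{n+1}$. *)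

From mathcomp Require Import all_boot.
Set Implicit Arguments. Unset Strict Implicit. Unset Printing Implicit Defensive.

Section CoR.
Variable V : finType.

(* Maps pi : {1,2} -> {1,2} are represented as functions 'I_2 -> 'I_2,
   with ord0 standing for 1 and the other ordinal for 2. *)
Inductive term : Type :=
| tVar of V
| tBot | tTop
| tCup of term & term
| tCap of term & term
| tCompl of term
| tI | tD
| tComp of term & term
| tDag of term & term
| tPerm of term & ('I_2 -> 'I_2).

(* a structure: carrier M (non-emptiness is implied by having 3 elements
   in REL_{>=3}) and an interpretation of the variables *)
Definition pick2 (M : Type) (i : 'I_2) (x1 x2 : M) : M :=
  if nat_of_ord i == 0 then x1 else x2.

Fixpoint sem (M : Type) (I : V -> M -> M -> Prop) (t : term) : M -> M -> Prop :=
  match t with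
  | tVar a => I a
  | tBot => fun _ _ => False
  | tTop => fun _ _ => True
  | tCup t1 t2 => fun x y => sem I t1 x y \/ sem I t2 x y
  | tCap t1 t2 => fun x y => sem I t1 x y /\ sem I t2 x y
  | tCompl t1 => fun x y => ~ sem I t1 x y
  | tI => fun x y => x = y
  | tD => fun x y => x <> y
  | tComp t1 t2 => fun x y => exists z, sem I t1 x z /\ sem I t2 z y
  | tDag t1 t2 => fun x y => forall z, sem I t1 x z \/ sem I t2 z y
  | tPerm t1 p => fun x1 x2 => sem I t1 (pick2 (p ord0) x1 x2) (pick2 (p ord_max) x1 x2)
  end.

Definition atleast3 (M : Type) : Prop :=
  exists x y z : M, x <> y /\ y <> z /\ x <> z.

Definition equiv_REL3 (t s : term) : Prop :=
  forall (M : Type) (I : V -> M -> M -> Prop), atleast3 M ->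
    forall x y, sem I t x y <-> sem I s x y.

Fixpoint vo (t : term) : nat :=
  match t with
  | tVar _ => 1
  | tBot | tTop | tI | tD => 0
  | tCup t1 t2 | tCap t1 t2 | tComp t1 t2 | tDag t1 t2 => vo t1 + vo t2
  | tCompl t1 | tPerm t1 _ => vo t1
  end.

Fixpoint subst (t : term) (a : V) (s : term) : term :=
  match t with
  | tVar b => if b == a then s else tVar b
  | tBot => tBot | tTop => tTop | tI => tI | tD => tD
  | tCup t1 t2 => tCup (subst t1 a s) (subst t2 a s)
  | tCap t1 t2 => tCap (subst t1 a s) (subst t2 a s)
  | tComp t1 t2 => tComp (subst t1 a s) (subst t2 a s)
  | tDag t1 t2 => tDag (subst t1 a s) (subst t2 a s)
  | tCompl t1 => tCompl (subst t1 a s)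
  | tPerm t1 p => tPerm (subst t1 a s) p
  end.

Fixpoint no_comp (t : term) : Prop :=
  match t with
  | tVar _ | tBot | tTop | tI | tD => True
  | tCup t1 t2 | tCap t1 t2 => no_comp t1 /\ no_comp t2
  | tComp _ _ | tDag _ _ => False
  | tCompl t1 | tPerm t1 _ => no_comp t1
  end.

Inductive Sigma : nat -> term -> Prop :=
| Sigma0 t : no_comp t -> Sigma 0 t
| SigmaS_S n t : Sigma n t -> Sigma n.+1 t
| SigmaS_P n t : Pi n t -> Sigma n.+1 t
| SigmaCup n s u : 1 <= n -> Sigma n s -> Sigma n u -> Sigma n (tCup s u)
| SigmaCap n s u : 1 <= n -> Sigma n s -> Sigma n u -> Sigma n (tCap s u)
| SigmaComp n s u : 1 <= n -> Sigma n s -> Sigma n u -> Sigma n (tComp s u)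
| SigmaPerm n s p : 1 <= n -> Sigma n s -> Sigma n (tPerm s p)
| SigmaPiComp n s u : 1 <= n -> Pi n s -> Pi n u -> Sigma n.+1 (tComp s u)
with Pi : nat -> term -> Prop :=
| Pi0 t : no_comp t -> Pi 0 t
| PiS_S n t : Sigma n t -> Pi n.+1 t
| PiS_P n t : Pi n t -> Pi n.+1 t
| PiCup n s u : 1 <= n -> Pi n s -> Pi n u -> Pi n (tCup s u)
| PiCap n s u : 1 <= n -> Pi n s -> Pi n u -> Pi n (tCap s u)
| PiDag n s u : 1 <= n -> Pi n s -> Pi n u -> Pi n (tDag s u)
| PiPerm n s p : 1 <= n -> Pi n s -> Pi n (tPerm s p)
| PiSigmaDag n s u : 1 <= n -> Sigma n s -> Sigma n u -> Pi n.+1 (tDag s u).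

End CoR.

From mathcomp Require Import all_boot.
From Stdlib Require Import Classical.

(* On a structure with at least three points, every variable-free term denotes
   one of bot, I, D, top: such a relation is described by its truth value on
   and off the diagonal, and these two bits are preserved by every operation.
   Composition is where the third point is needed (D . D = top needs a z
   different from both x and y).  In a term with at most one variable
   occurrence, every binary node therefore has a closed argument, which may be
   replaced by its constant, a Sigma_1 term.  Following the variable down
   through the Sigma_n rules, the first Pi subterm met (or the variable a
   itself) becomes t1, and the Sigma_1 context around it, with a in the hole,
   becomes t0. *)

Set Implicit Arguments. Unset Strict Implicit. Unset Printing Implicit Defensive.

Lemma atleast3_avoid2 (M : Type) :
  atleast3 M -> forall x y : M, exists z, z <> x /\ z <> y.
Proof.
move=> [p [q [r [pq [qr pr]]]]] x y.
have [pxy|Hp] := classic (p <> x /\ p <> y); first by exists p.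
have [qxy|Hq] := classic (q <> x /\ q <> y); first by exists q.
by exists r; split=> E; subst r; apply: Hq; split=> E; subst; apply: Hp; split=> E; subst.
Qed.

Section ConstantRelations.
Variable M : Type.
Implicit Types (R S : M -> M -> Prop) (d o : bool).

Definition cst_rel R d o :=
  (forall x, R x x <-> d) /\ (forall x y, x <> y -> R x y <-> o).

Lemma cst_rel_ext R S d o :
  (forall x y, R x y <-> S x y) -> cst_rel R d o -> cst_rel S d o.
Proof. by move=> RS [Rd Ro]; split=> [x|x y xy]; rewrite -RS; [apply: Rd|apply: Ro]. Qed.

Lemma cst_rel_eq R S d o : cst_rel R d o -> cst_rel S d o -> forall x y, R x y <-> S x y.
Proof.
move=> [Rd Ro] [Sd So] x y.
have [<-|xy] := classic (x = y); first by rewrite Rd Sd.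
by rewrite Ro // So.
Qed.

Lemma cst_rel_compl R d o : cst_rel R d o -> cst_rel (fun x y => ~ R x y) (~~ d) (~~ o).
Proof.
by move=> [Rd Ro]; split=> [x|x y xy]; rewrite (Rd, Ro) //; exact: (rwP negP).
Qed.

Lemma cst_rel_cup R S d o d' o' : cst_rel R d o -> cst_rel S d' o' ->
  cst_rel (fun x y => R x y \/ S x y) (d || d') (o || o').
Proof.
move=> [Rd Ro] [Sd So]; split=> [x|x y xy];
  by rewrite (Rd, Ro) // (Sd, So) //; exact: rwP orP.
Qed.

Lemma cst_rel_cap R S d o d' o' : cst_rel R d o -> cst_rel S d' o' ->
  cst_rel (fun x y => R x y /\ S x y) (d && d') (o && o').
Proof.
move=> [Rd Ro] [Sd So]; split=> [x|x y xy];
  by rewrite (Rd, Ro) // (Sd, So) //; exact: rwP andP.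
Qed.

Lemma cst_rel_comp R S d o d' o' : atleast3 M -> cst_rel R d o -> cst_rel S d' o' ->
  cst_rel (fun x y => exists z, R x z /\ S z y)
    (d && d' || o && o') [|| d && o', o && d' | o && o'].
Proof.
move=> M3 [Rd Ro] [Sd So]; split=> [x|x y xy]; split.
- move=> [z []]; have [<-|xz] := classic (x = z); first by rewrite Rd Sd => -> ->.
  by rewrite Ro // (So _ _ (nesym xz)) => -> ->; rewrite orbT.
- case/orP=> /andP[h h']; first by exists x; rewrite Rd Sd.
  have [z [zx _]] := atleast3_avoid2 M3 x x.
  by exists z; rewrite (Ro _ _ (nesym zx)) So.
- move=> [z []]; have [<-|xz] := classic (x = z); first by rewrite Rd So // => -> ->.
  have [->|zy] := classic (z = y); first by rewrite Ro // Sd => -> ->; rewrite orbT.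
  by rewrite Ro // So // => -> ->; rewrite !orbT.
- case/or3P=> /andP[h h'].
  + by exists x; rewrite Rd So.
  + by exists y; rewrite Ro // Sd.
  + have [z [zx zy]] := atleast3_avoid2 M3 x y.
    by exists z; rewrite (Ro _ _ (nesym zx)) So.
Qed.

Lemma cst_rel_dag R S d o d' o' : atleast3 M -> cst_rel R d o -> cst_rel S d' o' ->
  cst_rel (fun x y => forall z, R x z \/ S z y)
    ((d || d') && (o || o')) [&& d || o', o || d' & o || o'].
Proof.
move=> M3 /cst_rel_compl cR /cst_rel_compl cS.
have := cst_rel_compl (cst_rel_comp M3 cR cS); rewrite !negb_or !negb_and !negbK.
apply: cst_rel_ext => x y; split=> [nRS z|RS [z []]]; last by case: (RS z).
by apply: NNPP => /not_or_and nRSz; apply: nRS; exists z.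
Qed.

Lemma cst_rel_pick2 R d o (i j : 'I_2) : cst_rel R d o ->
  cst_rel (fun x y => R (pick2 i x y) (pick2 j x y))
    d (if (i == 0 :> nat) == (j == 0 :> nat) then d else o).
Proof.
rewrite /pick2 => -[Rd Ro]; split=> [x|x y xy]; first by case: ifP; case: ifP.
by case: ifP; case: ifP => //= _ _; apply: Ro => // /esym.
Qed.

End ConstantRelations.

Section ClosedTerms.
Variable V : finType.
Implicit Types (t s u : term V) (d o : bool).

Definition cst d o : term V :=
  if d then (if o then tTop V else tI V) else (if o then tD V else tBot V).

Lemma no_comp_cst d o : no_comp (cst d o).
Proof. by case: d; case: o. Qed.

Lemma vo_cst d o : vo (cst d o) = 0.
Proof. by case: d; case: o. Qed.

Lemma subst_cst d o a s : subst (cst d o) a s = cst d o.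
Proof. by case: d; case: o. Qed.

Lemma cst_rel_sem_cst M (I : V -> M -> M -> Prop) d o : cst_rel (sem I (cst d o)) d o.
Proof. by case: d; case: o; split=> /= [x|x y xy]; split. Qed.

Definition sem_cst_rel t d o :=
  forall M (I : V -> M -> M -> Prop), atleast3 M -> cst_rel (sem I t) d o.

Lemma closed_sem_cst_rel t : vo t = 0 -> exists d o, sem_cst_rel t d o.
Proof.
move/eqP; elim: t => //=.
- by exists false, false => M I _; exact: (cst_rel_sem_cst I false false).
- by exists true, true => M I _; exact: (cst_rel_sem_cst I true true).
- move=> s IHs u IHu; rewrite addn_eq0 => /andP[/IHs[d [o Hs]] /IHu[d' [o' Hu]]].
  by do 2 eexists; move=> M I M3; apply: cst_rel_cup (Hs M I M3) (Hu M I M3).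
- move=> s IHs u IHu; rewrite addn_eq0 => /andP[/IHs[d [o Hs]] /IHu[d' [o' Hu]]].
  by do 2 eexists; move=> M I M3; apply: cst_rel_cap (Hs M I M3) (Hu M I M3).
- move=> s IHs /IHs[d [o Hs]].
  by do 2 eexists; move=> M I M3; apply: cst_rel_compl (Hs M I M3).
- by exists true, false => M I _; exact: (cst_rel_sem_cst I true false).
- by exists false, true => M I _; exact: (cst_rel_sem_cst I false true).
- move=> s IHs u IHu; rewrite addn_eq0 => /andP[/IHs[d [o Hs]] /IHu[d' [o' Hu]]].
  by do 2 eexists; move=> M I M3; apply: cst_rel_comp M3 (Hs M I M3) (Hu M I M3).
- move=> s IHs u IHu; rewrite addn_eq0 => /andP[/IHs[d [o Hs]] /IHu[d' [o' Hu]]].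
  by do 2 eexists; move=> M I M3; apply: cst_rel_dag M3 (Hs M I M3) (Hu M I M3).
- move=> s IHs p /IHs[d [o Hs]].
  by do 2 eexists; move=> M I M3; apply: cst_rel_pick2 (Hs M I M3).
Qed.

Lemma closed_equiv_cst t : vo t = 0 -> exists d o, equiv_REL3 t (cst d o).
Proof.
move=> /closed_sem_cst_rel [d [o tdo]]; exists d, o => M I M3.
exact: cst_rel_eq (tdo M I M3) (cst_rel_sem_cst I d o).
Qed.

End ClosedTerms.

Section Decomposition.
Variables (V : finType) (a : V).
Implicit Types (t s u : term V).

Lemma equiv_REL3_cup s s' u u' : equiv_REL3 s s' -> equiv_REL3 u u' ->
  equiv_REL3 (tCup s u) (tCup s' u').
Proof. by move=> ss' uu' M I M3 x y /=; rewrite ss' // uu'. Qed.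

Lemma equiv_REL3_cap s s' u u' : equiv_REL3 s s' -> equiv_REL3 u u' ->
  equiv_REL3 (tCap s u) (tCap s' u').
Proof. by move=> ss' uu' M I M3 x y /=; rewrite ss' // uu'. Qed.

Lemma equiv_REL3_comp s s' u u' : equiv_REL3 s s' -> equiv_REL3 u u' ->
  equiv_REL3 (tComp s u) (tComp s' u').
Proof.
move=> ss' uu' M I M3 x y /=.
by split=> -[z [xz zy]]; exists z; [rewrite -ss' // -uu'|rewrite ss' // uu'].
Qed.

Lemma equiv_REL3_perm s s' p : equiv_REL3 s s' -> equiv_REL3 (tPerm s p) (tPerm s' p).
Proof. by move=> ss' M I M3 x y /=; rewrite ss'. Qed.

Lemma subst_id t : subst t a (tVar a) = t.
Proof.
elim: t => //= [b|s -> u ->|s -> u ->|s ->|s -> u ->|s -> u ->|s -> p] //.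
by case: eqP => [->|].
Qed.

Definition decomposes n t := exists t0 t1 : term V,
  [/\ Sigma 1 t0, vo t0 <= 1, Pi (n - 1) t1, vo t1 <= 1 & equiv_REL3 t (subst t0 a t1)].

Lemma decomposes_Sigma1 t : Sigma 1 t -> vo t <= 1 -> decomposes 1 t.
Proof. by exists t, (tVar a); split=> //; [apply: Pi0|rewrite subst_id]. Qed.

Lemma decomposes_Pi n t : Pi n t -> vo t <= 1 -> decomposes n.+1 t.
Proof.
exists (tVar a), t; split=> //; first exact/SigmaS_S/Sigma0.
- by rewrite subn1.
- by rewrite /= eqxx.
Qed.

Lemma decomposes_S n t : 0 < n -> decomposes n t -> decomposes n.+1 t.
Proof.
case: n => // n _ [t0 [t1 [St0 vt0 Pt1 vt1 tt0t1]]].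
by exists t0, t1; split=> //; move: Pt1; rewrite !subn1 => /PiS_P.
Qed.

Lemma decomposes_perm n s p : decomposes n s -> decomposes n (tPerm s p).
Proof.
move=> [t0 [t1 [St0 vt0 Pt1 vt1 st0t1]]].
by exists (tPerm t0 p), t1; split=> //; [apply: SigmaPerm|apply: equiv_REL3_perm].
Qed.

Section ClosedArgument.
Variable op : term V -> term V -> term V.
Hypothesis Sigma1_op : forall s u, Sigma 1 s -> Sigma 1 u -> Sigma 1 (op s u).
Hypothesis vo_op : forall s u, vo (op s u) = vo s + vo u.
Hypothesis subst_op : forall s u r, subst (op s u) a r = op (subst s a r) (subst u a r).
Hypothesis equiv_REL3_op : forall s s' u u',
  equiv_REL3 s s' -> equiv_REL3 u u' -> equiv_REL3 (op s u) (op s' u').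

Lemma decomposes_op n s u : vo (op s u) <= 1 ->
  (vo s <= 1 -> decomposes n s) -> (vo u <= 1 -> decomposes n u) -> decomposes n (op s u).
Proof.
rewrite vo_op => vsu Ds Du; have Sigma1_cst d o := SigmaS_S (Sigma0 (no_comp_cst V d o)).
have [vs0|vs_gt0] := posnP (vo s).
- have [d [o scst]] := closed_equiv_cst vs0.
  have [t0 [t1 [St0 vt0 Pt1 vt1 ut0t1]]] := Du (leq_trans (leq_addl _ _) vsu).
  exists (op (cst V d o) t0), t1; split=> //; first exact: Sigma1_op.
  + by rewrite vo_op vo_cst.
  + by rewrite subst_op subst_cst; apply: equiv_REL3_op.
- have /closed_equiv_cst[d [o ucst]] : vo u = 0.
    by apply/eqP; rewrite -leqn0 -(leq_add2l (vo s)) addn0 (leq_trans vsu).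
  have [t0 [t1 [St0 vt0 Pt1 vt1 st0t1]]] := Ds (leq_trans (leq_addr _ _) vsu).
  exists (op t0 (cst V d o)), t1; split=> //; first exact: Sigma1_op.
  + by rewrite vo_op vo_cst addn0.
  + by rewrite subst_op subst_cst; apply: equiv_REL3_op.
Qed.

End ClosedArgument.

Lemma decomposes_cup n s u : vo (tCup s u) <= 1 ->
  (vo s <= 1 -> decomposes n s) -> (vo u <= 1 -> decomposes n u) ->
  decomposes n (tCup s u).
Proof.
by apply: decomposes_op => // [? ? ? ?|]; [apply: SigmaCup|apply: equiv_REL3_cup].
Qed.

Lemma decomposes_cap n s u : vo (tCap s u) <= 1 ->
  (vo s <= 1 -> decomposes n s) -> (vo u <= 1 -> decomposes n u) ->
  decomposes n (tCap s u).
Proof.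
by apply: decomposes_op => // [? ? ? ?|]; [apply: SigmaCap|apply: equiv_REL3_cap].
Qed.

Lemma decomposes_comp n s u : vo (tComp s u) <= 1 ->
  (vo s <= 1 -> decomposes n s) -> (vo u <= 1 -> decomposes n u) ->
  decomposes n (tComp s u).
Proof.
by apply: decomposes_op => // [? ? ? ?|]; [apply: SigmaComp|apply: equiv_REL3_comp].
Qed.

Lemma Sigma_decomposes n t : Sigma n t -> 0 < n -> vo t <= 1 -> decomposes n t.
Proof.
elim=> {n t} //.
- move=> [|m] t St IHt _ vt; first exact: decomposes_Sigma1 (SigmaS_S St) vt.
  exact: decomposes_S (IHt isT vt).
- by move=> m t Pt _; apply: decomposes_Pi.
- by move=> m s u _ _ IHs _ IHu m_gt0 vsu; apply: decomposes_cup vsu (IHs _) (IHu _).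
- by move=> m s u _ _ IHs _ IHu m_gt0 vsu; apply: decomposes_cap vsu (IHs _) (IHu _).
- by move=> m s u _ _ IHs _ IHu m_gt0 vsu; apply: decomposes_comp vsu (IHs _) (IHu _).
- by move=> m s p _ _ IHs m_gt0 vs; apply/decomposes_perm/IHs.
- move=> m s u _ Ps Pu _ vsu.
  exact: decomposes_comp vsu (decomposes_Pi Ps) (decomposes_Pi Pu).
Qed.

End Decomposition.

Theorem lemma4p7 (V : finType) (a : V) :
  forall (n : nat), 2 <= n ->
  forall t : term V, Sigma n t -> vo t <= 1 ->
  exists (t0 t1 : term V),
    (Sigma 1 t0 /\ vo t0 <= 1) /\ (Pi (n - 1) t1 /\ vo t1 <= 1) /\
    equiv_REL3 t (subst t0 a t1).
Proof.
move=> n n_gt1 t St vt.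
have [t0 [t1 [St0 vt0 Pt1 vt1 tt0t1]]] := Sigma_decomposes a St (ltnW n_gt1) vt.
by exists t0, t1.
Qed.
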